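(* Let $p$ be a prime and let $q$ be a prime with $p < q < 2p-1$ such that $2p-1$ is prime and $\{p, q, 2p-1\}$ is a symmetric triple. Write $q = p + d$. Then $d = \frac{p-1}{3}$ or $d = \frac{p-1}{2}$.
   Context: Two distinct primes $p$ and $q$ form a symmetric pair if $\gcd(p-1, q-1) = |p-q|$. A symmetric triple is a set of three primes such that any two of them form a symmetric pair. *)

From mathcomp Require Import all_boot.
Set Implicit Arguments. Unset Strict Implicit. Unset Printing Implicit Defensive.

(* Absolute difference |p - q| on naturals (truncated subtractions: one is 0). *)
Definition absdiff (p q : nat) : nat := (p - q) + (q - p).

Definition sym_pair (p q : nat) : Prop :=
  [/\ prime p, prime q, p != q & gcdn p.-1 q.-1 = absdiff p q].

Definition sym_triple (a b c : nat) : Prop :=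
  [/\ sym_pair a b, sym_pair a c & sym_pair b c].

From mathcomp Require Import all_boot.
From mathcomp Require Import zify.

(* With m = p - 1 and n = q - 1, the pair condition for (p, q) says that
   d = n - m divides m, say m = k d, so n = (k + 1) d.  The pair condition for
   (q, 2p - 1) says that 2m - n = (k - 1) d divides n = (k + 1) d, hence
   k - 1 divides 2 and k is 2 or 3. *)

Lemma absdiff_lt m n : m < n -> absdiff m n = n - m.
Proof. by move=> /ltnW; rewrite /absdiff -subn_eq0 => /eqP->. Qed.

Lemma pred_dvdn_succ k : k.-1 %| k.+1 -> k = 2 \/ k = 3.
Proof.
case: k => [|[|k]] //=.
rewrite -(addn2 k.+1) dvdn_addr // => /(dvdn_leq (isT : 0 < 2)).
by case: k => [|[|k]]; [left | right |].
Qed.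

Lemma gcdn_sub_chain m n :
    m < n < 2 * m -> gcdn m n = n - m -> gcdn n (2 * m) = 2 * m - n ->
  3 * (n - m) = m \/ 2 * (n - m) = m.
Proof.
move=> /andP[lt_mn lt_n2m] gcd_mn gcd_n2m.
set d := n - m in gcd_mn *.
have d_gt0 : 0 < d by rewrite subn_gt0.
have /dvdnP[k m_eq] : d %| m by rewrite -gcd_mn dvdn_gcdl.
have n_eq : n = k.+1 * d by rewrite mulSn -m_eq /d subnK // ltnW.
have diff_eq : 2 * m - n = k.-1 * d by rewrite n_eq m_eq; case: k {m_eq n_eq}; lia.
have : k.-1 * d %| k.+1 * d by rewrite -diff_eq -n_eq -gcd_n2m dvdn_gcdl.
rewrite dvdn_pmul2r // => /pred_dvdn_succ[] k_eq; [right | left];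
  by rewrite m_eq k_eq mulnC.
Qed.

Theorem theorem1 (p q : nat) :
  prime p -> prime q -> p < q -> q < (2 * p).-1 -> prime (2 * p).-1 ->
  sym_triple p q (2 * p).-1 ->
  let d := q - p in
  3 * d = p.-1 \/ 2 * d = p.-1.
Proof.
move=> _ _ lt_pq lt_qr _ [[_ _ _ gcd_pq] _ [_ _ _ gcd_qr]] d.
have -> : d = q.-1 - p.-1 by rewrite /d; lia.
have r_eq : (2 * p).-1.-1 = 2 * p.-1 by lia.
apply: gcdn_sub_chain; first by apply/andP; split; lia.
- by rewrite gcd_pq absdiff_lt //; lia.
- by rewrite -r_eq gcd_qr absdiff_lt //; lia.
Qed.
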